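(* Assume the inverse theorem $\mathrm{GI}(s)$: for every $s\ge1$, $\delta>0$ there are $C,c>0$ such that any $f:[N]\to\mathbb{C}$ with $|f|\le1$ and $\|f\|_{U^{s+1}[N]}\ge\delta$ has $|\mathbb{E}_{n\in[N]}f(n)\overline{\psi(n)}|\ge c$ for some degree $\le s$ polynomial nilsequence $\psi$ of complexity $\le C$. Then for every $s\ge1$ and $\delta>0$ there exist a growth function $\Phi_{s,\delta}$ and $c'=c'(s,\delta)>0$ such that for every $N$ and every $f:[N]\to[-1,1]$ with $\|f\|_{U^{s+1}[N]}\ge\delta$ there is a set $E\subseteq[N]$ which is $s$-measurable with growth function $\Phi_{s,\delta}$ and satisfies $|\mathbb{E}_{n\in[N]}f(n)1_E(n)|\ge c'$.
   Context: A growth function is a monotone increasing $\Phi:\mathbb{R}^+\to\mathbb{R}^+$ with $\Phi(M)\ge M$. A degree $\le s$ polynomial nilsequence of complexity $\le M$ is $\psi(n)=F(g(n)\Gamma)$ where $(G/\Gamma,G_\bullet)$ is a filtered nilmanifold of degree $\le s$ and complexity $\le M$ (connected simply connected nilpotent Lie group $G$, discrete cocompact $\Gamma$, rational filtration $G=G_{(0)}=G_{(1)}\ge G_{(2)}\ge\cdots$ with $[G_{(i)},G_{(j)}]\subseteq G_{(i+j)}$, $G_{(i)}=\{\mathrm{id}\}$ for $i>s$, adapted Mal'cev basis defining a metric; complexity bounds dimension, degree and rationality of the basis), $g:\mathbb{Z}\to G$ is a polynomial sequence adapted to $G_\bullet$ (i.e. $\partial_{h_1}\cdots\partial_{h_i}g(n)\in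 G_{(i)}$, $\partial_hg(n)=g(n+h)g(n)^{-1}$), and $F:G/\Gamma\to\mathbb{C}$ has Lipschitz norm $\le M$. A set $E\subseteq[N]$ is $s$-measurable with growth function $\Phi$ if for every $M\ge1$ there is a degree $\le s$ polynomial nilsequence $\psi:\mathbb{Z}\to[0,1]$ of complexity $\le\Phi(M)$ with $\|\psi-1_E\|_{L^2[N]}\le1/M$, where $\|f\|_{L^2[N]}=(\mathbb{E}_{n\in[N]}|f(n)|^2)^{1/2}$. Gowers norms $\|\cdot\|_{U^{k}[N]}$ are defined by extending by zero into $\mathbb{Z}/\tilde N\mathbb{Z}$, $\tilde N\ge 2^kN$, and normalising by $\|1_{[N]}\|_{U^k}$, with $\|f\|_{U^k(G)}^{2^k}=\mathbb{E}_{x,h_1..h_k}\Delta_{h_1}\cdots\Delta_{h_k}f(x)$, $\Delta_hf(x)=f(x+h)\overline{f(x)}$. *)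

From HB Require Import structures.
From mathcomp Require Import all_boot all_order all_algebra.
From mathcomp Require Import reals Rstruct complex.
Set Implicit Arguments. Unset Strict Implicit. Unset Printing Implicit Defensive.
Import Order.TTheory GRing.Theory Num.Theory.
Local Open Scope ring_scope.
Local Open Scope complex_scope.

Notation RR := Rdefinitions.R.
Notation CC := (complex Rdefinitions.R).

Definition avgN (N : nat) (g : nat -> CC) : CC :=
  (N%:R)^-1 * \sum_(1 <= n < N.+1) g n.

Definition inN (N n : nat) : bool := (1 <= n <= N)%N.

(* average over Z/Nt Z, elements represented by 0..Nt-1 *)
Definition avgZ (Nt : nat) (g : nat -> CC) : CC :=
  (Nt%:R)^-1 * \sum_(x < Nt) g x.

Definition extZ (N Nt : nat) (f : nat -> CC) (x : nat) : CC :=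
  let y := (x %% Nt)%N in if inN N y then f y else 0.

Definition cDelta (Nt h : nat) (F : nat -> CC) (x : nat) : CC :=
  F ((x + h) %% Nt)%N * conjc (F x).

Fixpoint gowers_avg (Nt k : nat) (F : nat -> CC) : CC :=
  match k with
  | 0 => avgZ Nt F
  | k'.+1 => avgZ Nt (fun h => gowers_avg Nt k' (cDelta Nt h F))
  end.

(* ||F||_{U^k(Z/Nt Z)} = (gowers_avg)^(1/2^k), the 2^k-th root being taken as
   k iterated square roots of the (real, nonnegative) average *)
Definition gowersZ (Nt k : nat) (F : nat -> CC) : RR :=
  iter k Num.sqrt (complex.Re (gowers_avg Nt k F)).

Definition gowersN (k N : nat) (f : nat -> CC) : RR :=
  let Nt := (2 ^ k * N)%N in
  gowersZ Nt k (extZ N Nt f) / gowersZ Nt k (extZ N Nt (fun _ => 1)).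

(*   g = R^m with structure constants c: [X_i,X_j] = sum_k c i j k X_k,     *)
(*   X_i the standard basis (the Mal'cev basis). The simply connected group *)
(*   G is g with the Baker-Campbell-Hausdorff product (exp = identity).     *)

Definition vec (m : nat) := 'rV[RR]_m.
Definition sconst (m : nat) := 'I_m -> 'I_m -> 'I_m -> RR.

Definition lie_br m (c : sconst m) (x y : vec m) : vec m :=
  \row_k \sum_i \sum_j x 0 i * y 0 j * c i j k.

Fixpoint nestbr m (c : sconst m) (xs : seq (vec m)) : vec m :=
  match xs with
  | [::] => 0
  | x :: xs' => if xs' is [::] then x else lie_br c x (nestbr c xs')
  end.

Definition is_lie_algebra m (c : sconst m) : Prop :=
  (forall i j k, c i j k = - c j i k) /\
  (forall x y z : vec m,
     lie_br c x (lie_br c y z) + lie_br c y (lie_br c z x)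
     + lie_br c z (lie_br c x y) = 0).

Definition lie_nilpotent m (c : sconst m) (s : nat) : Prop :=
  forall xs : seq (vec m), size xs = s.+1 -> nestbr c xs = 0.

(* Dynkin's form of the BCH formula, truncated at total degree s (exact when
   the Lie algebra is nilpotent of step <= s):
   log(e^X e^Y) = sum_n (-1)^(n-1)/n sum_{r_i+t_i>0}
        [X^{r_1} Y^{t_1} ... X^{r_n} Y^{t_n}] / ((sum_i (r_i+t_i)) prod_i r_i! t_i!) *)
Definition dyn_word m n (rt : {ffun 'I_n -> 'I_(m.+1) * 'I_(m.+1)}) {V : Type}
    (x y : V) : seq V :=
  flatten [seq nseq (rt i).1 x ++ nseq (rt i).2 y | i <- enum 'I_n].

Definition dyn_len s n (rt : {ffun 'I_n -> 'I_(s.+1) * 'I_(s.+1)}) : nat :=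
  (\sum_(i < n) ((rt i).1 + (rt i).2))%N.

Definition dyn_ok s n (rt : {ffun 'I_n -> 'I_(s.+1) * 'I_(s.+1)}) : bool :=
  [forall i, (0 < (rt i).1 + (rt i).2)%N] && (dyn_len rt <= s)%N.

Definition dyn_coef s n (rt : {ffun 'I_n -> 'I_(s.+1) * 'I_(s.+1)}) : RR :=
  (-1) ^+ n.-1 / n%:R /
  ((dyn_len rt)%:R * \prod_(i < n) (((rt i).1)`!%:R * ((rt i).2)`!%:R)).

Definition bch m (c : sconst m) (s : nat) (x y : vec m) : vec m :=
  \sum_(n < s.+1 | (0 < n)%N)
    \sum_(rt : {ffun 'I_n -> 'I_(s.+1) * 'I_(s.+1)} | dyn_ok rt)
       dyn_coef rt *: nestbr c (dyn_word rt x y).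

Definition gmul m (c : sconst m) s (x y : vec m) : vec m := bch c s x y.
Definition ginv m (x : vec m) : vec m := - x.

(* Mal'cev coordinates of the second kind:
   malcev t = exp(t_1 X_1) exp(t_2 X_2) ... exp(t_m X_m) *)
Definition malcev m (c : sconst m) s (t : 'rV[RR]_m) : vec m :=
  foldr (gmul c s) 0 [seq t 0 i *: (delta_mx 0 i : vec m) | i <- enum 'I_m].

Definition int_vec m (t : 'rV[RR]_m) : Prop := forall i, exists z : int, t 0 i = z%:~R.

Definition in_Gamma m (c : sconst m) s (g : vec m) : Prop :=
  exists t, int_vec t /\ malcev c s t = g.

(* G_(i) = exp span(X_{m-d_i+1},...,X_m), d_i = dim G_(i) *)
Definition in_filt m (d : nat -> nat) (i : nat) (x : vec m) : Prop :=
  forall k : 'I_m, (k < m - d i)%N -> x 0 k = 0.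

(* span(X_{j+1},...,X_m) (0-based: coordinates >= j) is an ideal *)
Definition span_tail_ideal m (c : sconst m) (j : nat) : Prop :=
  forall (i k l : 'I_m), (j <= k)%N -> (l < j)%N -> c i k l = 0.

(* (G/Gamma, G_.) is a filtered nilmanifold of degree <= s, with G given by
   the nilpotent Lie algebra (R^m, c), filtration of dimensions d, and the
   standard basis an adapted Mal'cev basis. *)
Definition filtered_nilmanifold m (c : sconst m) (s : nat) (d : nat -> nat) : Prop :=
  [/\ is_lie_algebra c /\ lie_nilpotent c s,
      (* Mal'cev basis: nested ideals, unique coordinates, Gamma = Z-points *)
      (forall j, span_tail_ideal c j),
      (forall g : vec m, exists! t : 'rV[RR]_m, malcev c s t = g),
      (forall g h, in_Gamma c s g -> in_Gamma c s h -> in_Gamma c s (gmul c s g h)) /\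
      (forall g, in_Gamma c s g -> in_Gamma c s (ginv g))
    & (* filtration G = G_(0) = G_(1) >= G_(2) >= ..., G_(i) = id for i > s,
         [G_(i), G_(j)] <= G_(i+j) *)
      [/\ d 0 = m, d 1 = m, (forall i, (d i.+1 <= d i)%N),
          (forall i, (s < i)%N -> d i = 0)
        & (forall i j (x y : vec m), in_filt d i x -> in_filt d j y ->
             in_filt d (i + j)
               (gmul c s (gmul c s x y) (gmul c s (ginv x) (ginv y))))]].

Definition rat_height_le (M : RR) (x : RR) : Prop :=
  exists p q : int, q != 0 /\ (`|p|%:~R <= M) /\ (`|q|%:~R <= M) /\ x = p%:~R / q%:~R.

Definition complexity_le m (c : sconst m) (s : nat) (M : RR) : Prop :=
  [/\ m%:R <= M, s%:R <= M & forall i j k, rat_height_le M (c i j k)].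

Definition pder m (c : sconst m) s (h : int) (g : int -> vec m) (n : int) : vec m :=
  gmul c s (g (n + h)) (ginv (g n)).

Fixpoint pders m (c : sconst m) s (hs : seq int) (g : int -> vec m) : int -> vec m :=
  match hs with
  | [::] => g
  | h :: hs' => pders c s hs' (pder c s h g)
  end.

Definition poly_seq m (c : sconst m) s (d : nat -> nat) (g : int -> vec m) : Prop :=
  forall (hs : seq int) (n : int), in_filt d (size hs) (pders c s hs g n).

Definition supn m (t : 'rV[RR]_m) : RR := \big[Num.max/0]_(i < m) `|t 0 i|.

(* F : G/Gamma -> C, viewed as a right-Gamma-invariant F : G -> C *)
Definition Gamma_invariant m (c : sconst m) s (F : vec m -> CC) : Prop :=
  forall x gam, in_Gamma c s gam -> F (gmul c s x gam) = F x.

(* Lipschitz norm ||F||_oo + Lip(F) <= M, for the metric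
   d(x,y) = inf_{x_0 = x, ..., x_n = y} sum_i min(|psi(x_i x_{i+1}^-1)|,
                                              |psi(x_{i+1} x_i^-1)|)
   on G, psi the Mal'cev coordinates, and the induced quotient metric on
   G/Gamma (for Gamma-invariant F, Lipschitz for the quotient metric iff
   Lipschitz for d on G with the same constant). *)
Definition lip_norm_le m (c : sconst m) s (F : vec m -> CC) (M : RR) : Prop :=
  exists K1 K2 : RR, [/\ 0 <= K1, 0 <= K2, K1 + K2 <= M,
    (forall x, `|F x| <= K1%:C)
  & (forall (n : nat) (x : nat -> vec m) (t u : nat -> 'rV[RR]_m),
       (forall i, (i < n)%N ->
          malcev c s (t i) = gmul c s (x i) (ginv (x i.+1)) /\
          malcev c s (u i) = gmul c s (x i.+1) (ginv (x i))) ->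
       `|F (x 0%N) - F (x n)| <=
         (K2 * \sum_(i < n) Num.min (supn (t i)) (supn (u i)))%:C)].

Definition nilseq (s : nat) (M : RR) (psi : int -> CC) : Prop :=
  exists (s' m : nat) (c : sconst m) (d : nat -> nat) (g : int -> vec m)
         (F : vec m -> CC),
    [/\ (s' <= s)%N /\ filtered_nilmanifold c s' d, complexity_le c s' M,
        poly_seq c s' d g, Gamma_invariant c s' F /\ lip_norm_le c s' F M
      & forall n, psi n = F (g n)].

Definition growth_function (Phi : RR -> RR) : Prop :=
  (forall x y, 0 < x -> x <= y -> Phi x <= Phi y) /\
  (forall x, 0 < x -> 0 < Phi x /\ x <= Phi x).

Definition indic (E : nat -> bool) (n : nat) : CC := if E n then 1 else 0.

Definition L2N (N : nat) (g : nat -> CC) : RR :=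
  Num.sqrt (complex.Re (avgN N (fun n => `|g n| ^+ 2))).

Definition measurable_set (s : nat) (Phi : RR -> RR) (N : nat) (E : nat -> bool) : Prop :=
  forall M : RR, 1 <= M ->
    exists psi : int -> CC,
      [/\ nilseq s (Phi M) psi,
          (forall n, complex.Im (psi n) = 0 /\ 0 <= complex.Re (psi n) <= 1)
        & L2N N (fun n => psi (n%:Z) - indic E n) <= M^-1].

Definition GI_all : Prop :=
  forall (s : nat) (delta : RR), (1 <= s)%N -> 0 < delta ->
    exists C c : RR, 0 < C /\ 0 < c /\
      forall (N : nat) (f : nat -> CC), (0 < N)%N ->
        (forall n, inN N n -> `|f n| <= 1) ->
        delta <= gowersN s.+1 N f ->
        exists psi, nilseq s C psi /\
          c%:C <= `|avgN N (fun n => f n * conjc (psi n%:Z))|.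

(* By the inverse theorem, f correlates with a nilsequence psi of bounded
   complexity, hence (taking real or imaginary parts) with a real function
   v = P o psi, |v| <= C, P 1-Lipschitz.  Writing v + C as a layer-cake sum
   of indicators 1_{v > t_j} over a grid of thresholds of spacing h, either
   the mean of f is large (take E = [N]) or f correlates with 1_{v > t_j} for
   many j.  Counting shows that most thresholds are good: for every scale i
   at most N/(i+1)^2 values of v lie within distance w_i of t_j.  For a good
   t the set E = {v > t} is measurable: clamping (v - t)/w_i to [0,1] is a
   nilsequence of complexity O(C/w_i), and it differs from 1_E only where
   |v - t| < w_i, a set of density at most 1/(i+1)^2. *)

From HB Require Import structures.
From mathcomp Require Import all_boot all_order all_algebra.
From mathcomp Require Import reals Rstruct complex.
From mathcomp Require Import lra ring.
Set Implicit Arguments. Unset Strict Implicit. Unset Printing Implicit Defensive.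
Import Order.TTheory GRing.Theory Num.Theory.
Local Open Scope ring_scope.
Local Open Scope complex_scope.

Lemma normC_real (r : RR) : `|r%:C| = `|r|%:C.
Proof. by rewrite normc_def /= expr0n addr0 sqrtr_sqr. Qed.

Lemma normC_i : `|'i : CC| = 1.
Proof. by rewrite normc_def /= expr0n expr1n add0r sqrtr1. Qed.

Lemma normc_ge_Im (z : CC) : `|complex.Im z|%:C <= `|z|.
Proof.
by rewrite -[complex.Im z]opprK -ReiNIm normrN (le_trans (normc_ge_Re _)) // normrM normC_i mulr1.
Qed.

Definition ravg (N : nat) (g : nat -> RR) : RR :=
  (N%:R)^-1 * \sum_(1 <= n < N.+1) g n.

Section RealAverage.
Variable N : nat.
Implicit Types (g : nat -> RR) (x : RR).

Lemma eq_ravg g1 g2 : (forall n, inN N n -> g1 n = g2 n) -> ravg N g1 = ravg N g2.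
Proof.
by move=> h; congr (_ * _); apply: eq_big_nat => n hn; rewrite h // /inN -ltnS.
Qed.

Lemma ler_ravg g1 g2 : (forall n, inN N n -> g1 n <= g2 n) -> ravg N g1 <= ravg N g2.
Proof.
move=> h; rewrite ler_wpM2l ?invr_ge0 ?ler0n //.
by apply: ler_sum_nat => n hn; rewrite h // /inN -ltnS.
Qed.

Lemma ravg_cst x : (0 < N)%N -> ravg N (fun=> x) = x.
Proof.
move=> hN; rewrite /ravg sumr_const_nat subn1 /= -[x *+ N]mulr_natl mulKf //.
by rewrite pnatr_eq0 -lt0n.
Qed.

Lemma ravgB g1 g2 : ravg N (fun n => g1 n - g2 n) = ravg N g1 - ravg N g2.
Proof. by rewrite /ravg sumrB mulrBr. Qed.

Lemma ravgZ x g : ravg N (fun n => x * g n) = x * ravg N g.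
Proof. by rewrite /ravg -mulr_sumr mulrCA. Qed.

Lemma ravg_sum J (F : 'I_J -> nat -> RR) :
  ravg N (fun n => \sum_(j < J) F j n) = \sum_(j < J) ravg N (F j).
Proof. by rewrite /ravg exchange_big mulr_sumr. Qed.

Lemma norm_ravg_le g B : (0 < N)%N -> (forall n, inN N n -> `|g n| <= B) ->
  `|ravg N g| <= B.
Proof.
move=> hN h; rewrite -(ravg_cst B hN) /ravg normrM ger0_norm ?invr_ge0 ?ler0n //.
rewrite ler_wpM2l ?invr_ge0 ?ler0n // (le_trans (ler_norm_sum _ _ _)) //.
by apply: ler_sum_nat => n hn; rewrite h // /inN -ltnS.
Qed.

Lemma avgN_real g : avgN N (fun n => (g n)%:C) = (ravg N g)%:C.
Proof. by rewrite /avgN /ravg rmorphM fmorphV /= rmorph_nat rmorph_sum. Qed.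

Lemma avgN_mul_conjc g (psi : nat -> CC) :
  avgN N (fun n => (g n)%:C * conjc (psi n)) =
  (ravg N (fun n => g n * complex.Re (psi n)))%:C -
  'i * (ravg N (fun n => g n * complex.Im (psi n)))%:C.
Proof.
rewrite -!avgN_real /avgN [X in _ - X]mulrCA -mulrBr; congr (_ * _).
rewrite mulr_sumr -sumrB.
by apply: eq_bigr => n _; case: (psi n) => a b; simpc.
Qed.

End RealAverage.

Lemma norm_avgN_mul_conjc_le N g (psi : nat -> CC) :
  `|avgN N (fun n => (g n)%:C * conjc (psi n))| <=
  (`|ravg N (fun n => g n * complex.Re (psi n))| +
   `|ravg N (fun n => g n * complex.Im (psi n))|)%:C.
Proof.
rewrite avgN_mul_conjc (le_trans (ler_normB _ _)) //.
by rewrite normrM normC_i mul1r !normC_real rmorphD.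
Qed.

Definition indR (b : bool) : RR := if b then 1 else 0.

Lemma indR_ge0 b : 0 <= indR b. Proof. by case: b => /=; lra. Qed.
Lemma indR_le1 b : indR b <= 1. Proof. by case: b => /=; lra. Qed.

Lemma indicE (E : nat -> bool) n : indic E n = (indR (E n))%:C.
Proof. by rewrite /indic /indR; case: (E n). Qed.

Lemma eq_avgN N g1 g2 : (forall n, inN N n -> g1 n = g2 n) -> avgN N g1 = avgN N g2.
Proof.
by move=> h; congr (_ * _); apply: eq_big_nat => n hn; rewrite h // /inN -ltnS.
Qed.

Lemma L2N_real N (r : nat -> RR) :
  L2N N (fun n => (r n)%:C) = Num.sqrt (ravg N (fun n => r n ^+ 2)).
Proof.
rewrite /L2N (@eq_avgN N _ (fun n => (r n ^+ 2)%:C)) ?avgN_real // => n _.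
by rewrite normC_real -rmorphXn /= real_normK ?num_real.
Qed.

Lemma eq_L2N N g1 g2 : (forall n, inN N n -> g1 n = g2 n) -> L2N N g1 = L2N N g2.
Proof.
by move=> h; rewrite /L2N (@eq_avgN N _ (fun n => `|g2 n| ^+ 2)) // => n /h ->.
Qed.

Definition contraction (P : CC -> RR) : Prop :=
  forall z w, `|P z - P w|%:C <= `|z - w|.

Lemma contraction_Re : contraction (@complex.Re RR).
Proof. by move=> [a b] [c d]; exact: (normc_ge_Re ((a - c) +i* (b - d))). Qed.

Lemma contraction_Im : contraction (@complex.Im RR).
Proof. by move=> [a b] [c d]; exact: (normc_ge_Im ((a - c) +i* (b - d))). Qed.

Lemma complexity_le_trans m (c : sconst m) s M M' :
  complexity_le c s M -> M <= M' -> complexity_le c s M'.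
Proof.
case=> hm hs hc hM; split; [lra | lra | move=> i j k].
have [p [q [hq [hp [hq' ->]]]]] := hc i j k.
by exists p, q; split=> //; split; [lra | split; [lra | done]].
Qed.

Lemma nilseq_norm_le s C psi : nilseq s C psi -> forall n, `|psi n| <= C%:C.
Proof.
move=> [s' [m [c [d [g [F [_ _ _ [_ [K1 [K2 [_ hK2 hK hF _]]]] hpsi]]]]]]] n.
by rewrite hpsi (le_trans (hF _)) // lecR; lra.
Qed.

Lemma nilseq_lipschitz_comp s C psi (P : CC -> RR) (phi : RR -> RR) (L M : RR) :
  nilseq s C psi -> contraction P -> 0 <= L ->
  (forall x y, `|phi x - phi y| <= L * `|x - y|) ->
  (forall x, 0 <= phi x <= 1) ->
  C + 1 + L * C <= M ->
  nilseq s M (fun n => (phi (P (psi n)))%:C).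
Proof.
move=> [s' [m [c [d [g [F [hs hcx hg [hGa [K1 [K2 [hK1 hK2 hK hF hlip]]]] hpsi]]]]]]].
move=> hP hL hphi hphi01 hM.
have hLK : L * K2 <= L * C by rewrite ler_wpM2l //; lra.
have hLC : 0 <= L * C by rewrite mulr_ge0 //; lra.
exists s', m, c, d, g, (fun x => (phi (P (F x)))%:C); split=> //.
- by apply: complexity_le_trans hcx _; lra.
- split=> [x gam hgam | ]; first by rewrite hGa.
  exists 1, (L * K2); split; rewrite ?mulr_ge0 //; try lra.
  + by move=> x; rewrite normC_real lecR ger0_norm; have := hphi01 (P (F x)); lra.
  + move=> n x t u htu; rewrite -rmorphB normC_real lecR -mulrA.
    rewrite (le_trans (hphi _ _)) // ler_wpM2l // -lecR (le_trans (hP _ _)) //.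
    exact: hlip.
- by move=> n; rewrite hpsi.
Qed.

Ltac case_ifs := repeat match goal with
  | |- context [if ?a <= ?b then _ else _] => case: (lerP a b) => ?
  | |- context [if ?a < ?b then _ else _] => case: (ltrP a b) => ?
  end.

Definition clamp (M z : RR) : RR := if z <= 0 then 0 else if z <= M then z else M.

Lemma clamp_itv (M z : RR) : 0 <= M -> 0 <= clamp M z <= M.
Proof. by move=> hM; rewrite /clamp; case_ifs; lra. Qed.

Lemma clamp_lipschitz (M z z' : RR) : 0 <= M -> `|clamp M z - clamp M z'| <= `|z - z'|.
Proof.
move=> hM; rewrite ler_norml /clamp; case: (lerP 0 (z - z')) => hz.
- by rewrite (ger0_norm hz); case_ifs; lra.
- by rewrite (ltr0_norm hz); case_ifs; lra.
Qed.

Section Telescope.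
Variables (J : nat) (F g : nat -> RR).

Lemma sumr_telescope_ord : \sum_(j < J) (g j - g j.+1) = g 0%N - g J.
Proof.
rewrite -(big_mkord xpredT (fun j => g j - g j.+1)).
by rewrite -opprB -telescope_sumr // -sumrN; apply: eq_bigr => j _; rewrite opprB.
Qed.

Lemma ler_sum_telescope : (forall j, F j <= g j - g j.+1) ->
  \sum_(j < J) F j <= g 0%N - g J.
Proof. by move=> h; rewrite -sumr_telescope_ord; apply: ler_sum => j _. Qed.

Lemma ger_sum_telescope : (forall j, g j - g j.+1 <= F j) ->
  g 0%N - g J <= \sum_(j < J) F j.
Proof. by move=> h; rewrite -sumr_telescope_ord; apply: ler_sum => j _. Qed.

End Telescope.

Lemma layer_cake (h y : RR) (J : nat) : 0 < h -> 0 <= y -> y <= J%:R * h ->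
  y <= \sum_(j < J) h * indR (j%:R * h < y) <= y + h.
Proof.
move=> h_gt0 hy hyJ; set F := fun j : nat => h * indR (j%:R * h < y).
have hj (j : nat) : 0 <= j%:R * h by rewrite mulr_ge0 // ltW.
apply/andP; split.
- apply: le_trans (@ger_sum_telescope J F (fun j => clamp y (y - j%:R * h)) _).
    by rewrite /clamp mul0r subr0; case_ifs; lra.
  move=> j; have := hj j.
  by rewrite /F /clamp /indR -natr1 mulrDl mul1r; case_ifs; lra.
- apply: le_trans (@ler_sum_telescope J F (fun j => clamp (y + h) (y + h - j%:R * h)) _) _.
    move=> j; have := hj j.
    by rewrite /F /clamp /indR -natr1 mulrDl mul1r; case_ifs; lra.
  by rewrite /clamp mul0r subr0; case_ifs; lra.
Qed.

Lemma grid_count (h y w : RR) (J : nat) : 0 < h -> 0 <= w ->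
  \sum_(j < J) indR (`|y - j%:R * h| < w) <= (2 * w + h) / h.
Proof.
move=> h_gt0 hw; rewrite ler_pdivlMr // mulr_suml.
apply: le_trans
  (@ler_sum_telescope J (fun j : nat => indR (`|y - j%:R * h| < w) * h)
     (fun j => clamp (2 * w + h) (y + w + h - j%:R * h)) _) _.
  move=> j; rewrite /clamp /indR -natr1 mulrDl mul1r.
  case: (ltrP `|y - j%:R * h| w); last by case_ifs; lra.
  by rewrite ltr_norml => /andP [? ?]; case_ifs; lra.
by rewrite /clamp; case_ifs; lra.
Qed.

Lemma sqr_clamp_sub_indR_le (v t w : RR) : 0 < w ->
  (clamp 1 ((v - t) / w) - indR (t < v)) ^+ 2 <= indR (`|v - t| < w).
Proof.
move=> hw; set u := (v - t) / w.
have hu : v - t = u * w by rewrite /u divfK // gt_eqF.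
rewrite /indR; case: (ltrP `|v - t| w) => hvt.
- have := @clamp_itv 1 u ler01.
  by case: ifP => _ /andP [? ?]; rewrite expr2; nra.
case: (lerP 0 (v - t)) => hs; rewrite ?(ger0_norm hs) ?(ltr0_norm hs) in hvt.
- have -> : (t < v) = true by apply/idP; lra.
  have : 1 <= u by rewrite /u ler_pdivlMr //; lra.
  by rewrite /clamp expr2; case_ifs; nra.
- have -> : (t < v) = false by apply/negbTE; rewrite -leNgt; lra.
  have : u < 0 by rewrite /u pmulr_llt0 // invr_gt0.
  by rewrite /clamp expr2; case_ifs; nra.
Qed.

Definition quartic (x : RR) : RR := x ^+ 3 * (x + 1).

Lemma quartic_gt0 (x : RR) : 0 < x -> 0 < quartic x.
Proof. by move=> hx; rewrite mulr_gt0 ?exprn_gt0 // addr_gt0. Qed.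

Lemma ler_quartic (x y : RR) : 0 <= x -> x <= y -> quartic x <= quartic y.
Proof.
move=> hx hxy; apply: ler_pM; rewrite ?exprn_ge0 ?lerD2r //; first lra.
by rewrite lerXn2r // nnegrE (le_trans hx).
Qed.

(* The widths are chosen so that [window a i * (i+1)^2 = a / ((i+1)(i+2))]
   is summable in i, with sum at most a. *)
Definition window (a : RR) (i : nat) : RR := a / quartic i.+1%:R.

Lemma window_gt0 (a : RR) i : 0 < a -> 0 < window a i.
Proof. by move=> ha; rewrite divr_gt0 ?quartic_gt0 ?ltr0Sn. Qed.

Lemma window_anti (a : RR) i k : 0 < a -> (i <= k)%N -> window a k <= window a i.
Proof.
move=> ha hik; apply: ler_wpM2l; first exact: ltW.
by rewrite lef_pV2 ?posrE ?quartic_gt0 ?ltr0Sn // ler_quartic ?ler_nat.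
Qed.

Lemma window_le (a : RR) i : 0 < a -> window a i <= a.
Proof.
move=> ha; rewrite ler_pdivrMr ?quartic_gt0 ?ltr0Sn // ler_peMr ?ltW //.
have hq : quartic 1 <= quartic i.+1%:R by rewrite ler_quartic ?ler01 ?ler1n.
by apply: lt_le_trans hq; rewrite /quartic expr1n mul1r; lra.
Qed.

Lemma window_mul_sqr (a : RR) i :
  window a i * i.+1%:R ^+ 2 = a / (i.+1%:R * i.+2%:R).
Proof.
have hi : 0 < (i.+1%:R : RR) by rewrite ltr0Sn.
by rewrite /window /quartic -[i.+2%:R]natr1; field; lra.
Qed.

Lemma sum_inv_mul_succ_le1 K : \sum_(i < K) (i.+1%:R * i.+2%:R : RR)^-1 <= 1.
Proof.
have -> : \sum_(i < K) (i.+1%:R * i.+2%:R : RR)^-1 =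
          \sum_(i < K) ((i.+1%:R : RR)^-1 - (i.+2%:R)^-1).
  apply: eq_bigr => i _; have hi : 0 < (i.+1%:R : RR) by rewrite ltr0Sn.
  by rewrite -[i.+2%:R]natr1; field; lra.
rewrite (sumr_telescope_ord K (fun j => (j.+1%:R : RR)^-1)) invr1 gerBl.
by rewrite invr_ge0 ler0n.
Qed.

Definition near_count (N : nat) (v : nat -> RR) (t w : RR) : RR :=
  \sum_(1 <= n < N.+1) indR (`|v n - t| < w).

Definition good_threshold (N : nat) (v : nat -> RR) (a t : RR) : Prop :=
  forall i : nat, near_count N v t (window a i) * i.+1%:R ^+ 2 <= N%:R.

Section NearCount.
Variables (N : nat) (v : nat -> RR).

Lemma near_count_ge0 (t w : RR) : 0 <= near_count N v t w.
Proof. by apply: sumr_ge0 => n _; apply: indR_ge0. Qed.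

Lemma near_count_mono (t w w' : RR) : w <= w' -> near_count N v t w <= near_count N v t w'.
Proof.
move=> hw; apply: ler_sum => n _; rewrite /indR.
by case: ltrP => h1; case: ltrP => h2 //; lra.
Qed.

Lemma near_count_lt1 (t w : RR) : near_count N v t w < 1 -> near_count N v t w = 0.
Proof.
have -> : near_count N v t w = (\sum_(1 <= n < N.+1) nat_of_bool (`|v n - t| < w)%R)%:R.
  by rewrite natr_sum; apply: eq_bigr => n _; rewrite /indR; case: (_ < _).
by rewrite ltrn1 ltnS leqn0 => /eqP ->.
Qed.

Lemma good_threshold_le (a t : RR) : 0 < a ->
  (forall i, (i <= N)%N -> near_count N v t (window a i) * i.+1%:R ^+ 2 <= N%:R) ->
  good_threshold N v a t.
Proof.
move=> ha hgood i; case: (leqP i N) => [/hgood // | hNi].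
suff -> : near_count N v t (window a i) = 0 by rewrite mul0r ler0n.
apply/eqP; rewrite eq_le near_count_ge0 andbT.
apply: le_trans (near_count_mono t (window_anti ha (ltnW hNi))) _.
rewrite le_eqVlt near_count_lt1 ?eqxx //.
have := hgood N (leqnn N); have := near_count_ge0 t (window a N).
have := ler0n RR N; rewrite -natr1 expr2; nra.
Qed.

Lemma sum_near_count_grid_le (t0 h w : RR) J : 0 < h -> h <= w ->
  \sum_(j < J) near_count N v (j%:R * h - t0) w <= N%:R * (3 * w / h).
Proof.
move=> hh hw; rewrite /near_count exchange_big /=.
apply: le_trans (_ : \sum_(1 <= n < N.+1) ((2 * w + h) / h) <= _).
  apply: ler_sum => n _; rewrite (le_trans _ (grid_count (v n + t0) J hh _)) //; last lra.
  by apply: ler_sum => j _; rewrite opprB addrA.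
rewrite sumr_const_nat subn1 /= -[_ *+ N]mulr_natl ler_wpM2l ?ler0n //.
by rewrite ler_pM2r ?invr_gt0 //; lra.
Qed.

End NearCount.

Lemma indR_lt_le_div (n x : RR) : 0 < n -> 0 <= x -> indR (n < x) <= x / n.
Proof.
move=> hn hx; rewrite /indR; case: ltrP => hnx; last by rewrite divr_ge0 // ltW.
by rewrite ler_pdivlMr // mul1r ltW.
Qed.

Lemma sum_bad_thresholds_le N (v : nat -> RR) (t0 a : RR) J :
  0 < a -> (0 < N)%N ->
  \sum_(i < N.+1) \sum_(j < J) indR (N%:R <
     near_count N v (j%:R * window a N - t0) (window a i) * i.+1%:R ^+ 2)
  <= 3 * a / window a N.
Proof.
move=> ha hN; set h := window a N; have hh : 0 < h := window_gt0 N ha.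
have hNR : 0 < (N%:R : RR) by rewrite ltr0n.
have hrow (i : 'I_N.+1) : \sum_(j < J) indR (N%:R <
    near_count N v (j%:R * h - t0) (window a i) * i.+1%:R ^+ 2)
    <= 3 * a / h * (i.+1%:R * i.+2%:R)^-1.
  set q := (i.+1%:R : RR) ^+ 2; have hq : 0 < q by rewrite exprn_gt0 ?ltr0Sn.
  have hw : h <= window a i by apply: window_anti; rewrite // -ltnS.
  have hsum := sum_near_count_grid_le N v t0 J hh hw.
  apply: le_trans (_ : (\sum_(j < J) near_count N v (j%:R * h - t0) (window a i))
                        * q / N%:R <= _).
    rewrite !mulr_suml; apply: ler_sum => j _.
    by rewrite indR_lt_le_div // mulr_ge0 ?near_count_ge0 ?ltW.
  have hi : 0 < (i.+1%:R : RR) by rewrite ltr0Sn.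
  have -> : 3 * a / h * (i.+1%:R * i.+2%:R)^-1 = N%:R * (3 * window a i / h) * q / N%:R.
    rewrite -(mulfK (lt0r_neq0 hq) (window a i)) /q window_mul_sqr -[i.+2%:R]natr1.
    by field; rewrite !gt_eqF //; lra.
  by rewrite ler_pM2r ?invr_gt0 // ler_pM2r.
apply: le_trans (ler_sum _ (fun i _ => hrow i)) _.
rewrite -mulr_sumr -[X in _ <= X]mulr1; apply: ler_wpM2l; last exact: sum_inv_mul_succ_le1.
by rewrite divr_ge0 //; lra.
Qed.

Lemma norm_ravg_mul_le_layers N (f v : nat -> RR) (A h : RR) (J : nat) :
  (0 < N)%N -> 0 < h -> 2 * A <= J%:R * h ->
  (forall n, inN N n -> `|f n| <= 1) -> (forall n, inN N n -> `|v n| <= A) ->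
  `|ravg N (fun n => f n * v n)| <=
  h * \sum_(j < J) `|ravg N (fun n => f n * indR (j%:R * h - A < v n))|
  + A * `|ravg N f| + h.
Proof.
move=> hN hh hJ hf hv.
have hA : 0 <= A by apply: le_trans (hv 1%N _); rewrite ?normr_ge0 // /inN leqnn.
(* layer cake: v n + A is [\sum_j h 1(j h < v n + A)] up to an error in [0, h] *)
set e := fun n => \sum_(j < J) h * indR (j%:R * h < v n + A) - (v n + A).
have he n : inN N n -> 0 <= e n <= h.
  move=> hn; have := hv n hn; rewrite ler_norml => /andP [hv1 hv2].
  have /andP [hl hu] := @layer_cake h (v n + A) J hh (ltac:(lra)) (ltac:(lra)).
  by rewrite /e; apply/andP; split; lra.
have -> : ravg N (fun n => f n * v n) =
    h * \sum_(j < J) ravg N (fun n => f n * indR (j%:R * h - A < v n))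
    - A * ravg N f - ravg N (fun n => f n * e n).
  rewrite mulr_sumr -(eq_bigr _ (fun j _ => ravgZ N h _)) -ravg_sum -ravgZ -!ravgB.
  apply: eq_ravg => n _; rewrite /e.
  have -> : \sum_(j < J) h * (f n * indR (j%:R * h - A < v n)) =
            f n * \sum_(j < J) h * indR (j%:R * h < v n + A).
    by rewrite mulr_sumr; apply: eq_bigr => j _; rewrite ltrBlDr; ring.
  ring.
have hfe : `|ravg N (fun n => f n * e n)| <= h.
  apply: norm_ravg_le => // n hn; have /andP [he0 he1] := he n hn.
  by rewrite normrM (ger0_norm he0) -[h]mul1r ler_pM ?hf.
apply: le_trans (ler_normB _ _) _; apply: lerD => //.
apply: le_trans (ler_normB _ _) _; rewrite !normrM (gtr0_norm hh) (ger0_norm hA).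
by apply: lerD => //; apply: ler_wpM2l; [exact: ltW | exact: ler_norm_sum].
Qed.

Lemma sum_norm_le_count_large (J : nat) (X : 'I_J -> RR) (th : RR) :
  0 <= th -> (forall j, `|X j| <= 1) ->
  \sum_(j < J) `|X j| <= \sum_(j < J) indR (th <= `|X j|) + J%:R * th.
Proof.
have -> : J%:R * th = \sum_(j < J) th by rewrite sumr_const card_ord mulr_natl.
move=> hth hX; rewrite -big_split /=.
by apply: ler_sum => j _; have := hX j; rewrite /indR; case: (lerP th `|X j|); lra.
Qed.

Lemma exists_good_index (J K : nat) (P : 'I_J -> bool) (B : 'I_K -> 'I_J -> bool) :
  \sum_(i < K) \sum_(j < J) indR (B i j) < \sum_(j < J) indR (P j) ->
  exists j, P j /\ forall i, ~~ B i j.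
Proof.
move=> hlt; case: (boolP [exists j, P j && [forall i, ~~ B i j]]).
  by case/existsP => j /andP [hP /forallP hB]; exists j.
move=> /existsPn hnone; exfalso; move: hlt; rewrite exchange_big /= ltNge => /negP; apply.
apply: ler_sum => j _; have := hnone j; case: (P j) => /=; last first.
  by move=> _; apply: sumr_ge0 => i _; apply: indR_ge0.
case/forallPn => i; rewrite negbK => hBi.
by rewrite (bigD1 i) //= {1}/indR hBi lerDl sumr_ge0 // => k _; apply: indR_ge0.
Qed.

Lemma count_large_layers_ge N (f v : nat -> RR) (A c h : RR) (J : nat) :
  (0 < N)%N -> 0 < A -> 0 < h -> h <= c / 64 -> 2 * A <= J%:R * h <= 2 * A + h ->
  (forall n, inN N n -> `|f n| <= 1) -> (forall n, inN N n -> `|v n| <= A) ->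
  c / 2 <= `|ravg N (fun n => f n * v n)| -> `|ravg N f| < c / (8 * A) ->
  c / (16 * h) <= \sum_(j < J)
     indR (c / (16 * A) <= `|ravg N (fun n => f n * indR (j%:R * h - A < v n))|).
Proof.
move=> hN hA hh hhc /andP [hJl hJu] hf hv hcor hsmall.
set th := c / (16 * A).
pose X := fun j : nat => ravg N (fun n => f n * indR (j%:R * h - A < v n)).
have hvA : `|ravg N (fun n => f n * v n)| <= A.
  apply: norm_ravg_le => // n hn; rewrite normrM -[A]mul1r.
  by apply: ler_pM; rewrite ?normr_ge0 ?hf ?hv.
have hc : 0 < c by lra.
have /andP [hth0 hth8] : 0 <= th <= 1 / 8.
  rewrite divr_ge0 /=; [| lra | rewrite mulr_ge0 //; lra].
  by rewrite ler_pdivrMr ?mulr_gt0 //; lra.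
have hX1 (j : 'I_J) : `|X j| <= 1.
  apply: norm_ravg_le => // n hn; rewrite normrM -[1]mul1r.
  by apply: ler_pM; rewrite ?normr_ge0 ?hf ?indR_le1 // ger0_norm ?indR_ge0 ?indR_le1.
have hS := sum_norm_le_count_large hth0 hX1.
have hlayers := norm_ravg_mul_le_layers hN hh hJl hf hv.
rewrite /X /= in hS hX1.
have hAf : A * `|ravg N f| <= c / 8.
  by rewrite mulrC -ler_pdivlMr // -mulrA -invfM; apply: ltW.
have hJth : (J%:R * h) * th <= c / 8 + h / 8.
  apply: le_trans (_ : (2 * A + h) * th <= _); first nra.
  by rewrite mulrDl [2 * A * th](_ : _ = c / 8); [nra | rewrite /th; field; lra].
have := ler_wpM2l (ltW hh) hS; rewrite ler_pdivrMr ?mulr_gt0 //; nra.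
Qed.

Lemma exists_good_threshold N (f v : nat -> RR) (A c : RR) :
  (0 < N)%N -> 0 < A -> 0 < c ->
  (forall n, inN N n -> `|f n| <= 1) -> (forall n, inN N n -> `|v n| <= A) ->
  c / 2 <= `|ravg N (fun n => f n * v n)| ->
  c / (8 * A) <= `|ravg N f| \/
  exists t, c / (16 * A) <= `|ravg N (fun n => f n * indR (t < v n))| /\
            good_threshold N v (c / 64) t.
Proof.
move=> hN hA hc hf hv hcor.
set a := c / 64; have ha : 0 < a by rewrite divr_gt0.
set h := window a N; have hh : 0 < h := window_gt0 N ha.
set J := (Num.truncn (2 * A / h)).+1.
have hJ : 2 * A <= J%:R * h <= 2 * A + h.
  have h0 : 0 <= 2 * A / h by apply: divr_ge0; lra.
  have /andP [hlo hhi] := @Num.Theory.truncn_itv _ _ h0.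
  apply/andP; split; first by rewrite -ler_pdivrMr // ltW.
  by rewrite /J -[X in X * h]natr1 mulrDl mul1r lerD2r -ler_pdivlMr.
case: (lerP (c / (8 * A)) `|ravg N f|) => [|hsmall]; [by left | right].
have hlarge := count_large_layers_ge hN hA hh (window_le N ha) hJ hf hv hcor hsmall.
have hlt : \sum_(i < N.+1) \sum_(j < J)
      indR (N%:R < near_count N v (j%:R * h - A) (window a i) * i.+1%:R ^+ 2)
    < \sum_(j < J)
      indR (c / (16 * A) <= `|ravg N (fun n => f n * indR (j%:R * h - A < v n))|).
  apply: le_lt_trans (sum_bad_thresholds_le v A J ha hN) _.
  apply: lt_le_trans hlarge; rewrite [(16 * h)^-1]invfM [c * _]mulrA ltr_pM2r ?invr_gt0 //.
  by rewrite /a; lra.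
have [j [hj hgood]] := exists_good_index hlt.
exists (j%:R * h - A); split => //.
apply: good_threshold_le => // i hi.
by rewrite leNgt; apply: (hgood (Ordinal (hi : (i < N.+1)%N))).
Qed.

(* The summand M makes [growth C a M >= M]. *)
Definition growth (C a M : RR) : RR := C + 1 + M + quartic (M + 1) / a * C.

Lemma growth_function_growth C a : 0 < C -> 0 < a -> growth_function (growth C a).
Proof.
move=> hC ha; split=> [x y hx hxy | x hx].
  have : quartic (x + 1) / a * C <= quartic (y + 1) / a * C.
    by rewrite ler_pM2r // ler_pM2r ?invr_gt0 // ler_quartic //; lra.
  by rewrite /growth; lra.
have hq : 0 < quartic (x + 1) by apply: quartic_gt0; lra.
have : 0 <= quartic (x + 1) / a * C by rewrite mulr_ge0 ?divr_ge0 // ltW.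
by rewrite /growth; lra.
Qed.

Lemma nilseq_complexity_ge0 s C psi : nilseq s C psi -> 0 <= C.
Proof. by move=> hpsi; rewrite -ler0c (le_trans _ (nilseq_norm_le hpsi 0)). Qed.

Lemma superlevel_measurable s C psi (P : CC -> RR) N (a t : RR) :
  nilseq s C psi -> contraction P -> 0 < a -> (0 < N)%N ->
  good_threshold N (fun n => P (psi n%:Z)) a t ->
  measurable_set s (growth C a) N (fun n => inN N n && (t < P (psi n%:Z))).
Proof.
move=> hpsi hP ha hN hgood M hM.
have hC := nilseq_complexity_ge0 hpsi.
set i := Num.truncn M; set w := window a i; have hw : 0 < w := window_gt0 i ha.
have /andP [hi1 hi2] := @Num.Theory.truncn_itv _ M (ltW (lt_le_trans ltr01 hM)).
pose phi x := clamp 1 ((x - t) / w).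
exists (fun n => (phi (P (psi n)))%:C); split.
- apply: (nilseq_lipschitz_comp (L := w^-1) hpsi hP).
  + by rewrite invr_ge0 ltW.
  + move=> x y; apply: le_trans (clamp_lipschitz _ _ ler01) _.
    by rewrite -mulrBl opprB addrA subrK normrM mulrC [`|w^-1|]ger0_norm // invr_ge0 ltW.
  + by move=> x; exact: (clamp_itv _ ler01).
  + have : w^-1 * C <= quartic (M + 1) / a * C.
      rewrite ler_wpM2r // /w invf_div ler_pM2r ?invr_gt0 // ler_quartic //.
      by rewrite -natr1 lerD2r.
    by rewrite /growth; lra.
- by move=> n /=; split => //; exact: (clamp_itv _ ler01).
rewrite (@eq_L2N N _ (fun n => (phi (P (psi n%:Z)) - indR (t < P (psi n%:Z)))%:C));
  last by move=> n hn; rewrite indicE hn rmorphB.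
have hM0 : 0 <= M^-1 by rewrite invr_ge0; lra.
rewrite L2N_real -[M^-1](ger0_norm hM0) -sqrtr_sqr ler_sqrt ?sqr_ge0 //.
apply: le_trans (_ : ravg N (fun n => indR (`|P (psi n%:Z) - t| < w)) <= _).
  by apply: ler_ravg => n _; apply: sqr_clamp_sub_indR_le.
have hNR : 0 < (N%:R : RR) by rewrite ltr0n.
have hq : 0 < (i.+1%:R : RR) ^+ 2 by rewrite exprn_gt0 ?ltr0Sn.
have hcount : near_count N (fun n => P (psi n%:Z)) t w <= N%:R / i.+1%:R ^+ 2.
  by rewrite ler_pdivlMr //; apply: hgood.
have -> : ravg N (fun n => indR (`|P (psi n%:Z) - t| < w)) =
  N%:R^-1 * near_count N (fun n => P (psi n%:Z)) t w by [].
have hNi : 0 <= (N%:R : RR)^-1 by rewrite invr_ge0 ler0n.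
apply: le_trans (ler_wpM2l hNi hcount) _.
rewrite mulrA mulVf ?gt_eqF // mul1r exprVn lef_pV2 ?posrE ?exprn_gt0 //; last lra.
by rewrite lerXn2r ?nnegrE ?ler0n //; lra.
Qed.

Lemma inN_measurable s C psi N (a : RR) :
  nilseq s C psi -> 0 < a -> measurable_set s (growth C a) N (inN N).
Proof.
move=> hpsi ha M hM; have hC := nilseq_complexity_ge0 hpsi.
(* The constant 1, realised on the nilmanifold of psi. *)
exists (fun=> 1%:C); split.
- apply: (@nilseq_lipschitz_comp s C psi (@complex.Re RR) (fun=> 1) 0) => //.
  + exact: contraction_Re.
  + by move=> x y; rewrite subrr normr0 mul0r.
  + by move=> x; rewrite ler01 lexx.
  + have hq : 0 < quartic (M + 1) by apply: quartic_gt0; lra.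
    have : 0 <= quartic (M + 1) / a * C by rewrite mulr_ge0 // divr_ge0 // ltW.
    by rewrite /growth mul0r; lra.
- by move=> n /=; split => //; rewrite ler01 lexx.
rewrite (@eq_L2N N _ (fun=> 0%:C)) => [|n hn]; last by rewrite indicE hn subrr.
rewrite (L2N_real N (fun=> 0)) /ravg big1 => [|n _]; last by rewrite expr0n.
by rewrite mulr0 sqrtr0 invr_ge0; lra.
Qed.

Lemma correlation_measurable_set s C c psi (P : CC -> RR) N (f : nat -> RR) :
  0 < C -> 0 < c -> (0 < N)%N -> nilseq s C psi -> contraction P -> P 0 = 0 ->
  (forall n, inN N n -> `|f n| <= 1) ->
  c / 2 <= `|ravg N (fun n => f n * P (psi n%:Z))| ->
  exists E : nat -> bool,
    [/\ forall n, E n -> inN N n, measurable_set s (growth C (c / 64)) N E &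
        (c / (16 * C))%:C <= `|avgN N (fun n => (f n)%:C * indic E n)|].
Proof.
move=> hC hc hN hpsi hP hP0 hf hcor.
have hv n : inN N n -> `|P (psi n%:Z)| <= C.
  move=> _; have := hP (psi n%:Z) 0; rewrite hP0 !subr0 => hPn.
  by rewrite -lecR (le_trans hPn) // (nilseq_norm_le hpsi).
have ha : 0 < c / 64 by rewrite divr_gt0.
have [hl | [t [ht hgood]]] := exists_good_threshold hN hC hc hf hv hcor.
- exists (inN N); split=> //; first exact: (inN_measurable N hpsi ha).
  rewrite (@eq_avgN N _ (fun n => (f n)%:C)) => [|n hn]; last by rewrite indicE hn mulr1.
  rewrite avgN_real normC_real lecR (le_trans _ hl) // ler_pM2l //.
  by rewrite lef_pV2 ?posrE ?mulr_gt0 //; lra.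
- exists (fun n => inN N n && (t < P (psi n%:Z))); split; first by move=> n /andP [].
    exact: (superlevel_measurable hpsi hP ha hN hgood).
  rewrite (@eq_avgN N _ (fun n => (f n * indR (t < P (psi n%:Z)))%:C)) => [|n hn].
    by rewrite avgN_real normC_real lecR.
  by rewrite indicE hn rmorphM.
Qed.

Theorem mainTheorem7 :
  GI_all ->
  forall (s : nat) (delta : RR), (1 <= s)%N -> 0 < delta ->
    exists (Phi : RR -> RR) (c' : RR),
      growth_function Phi /\ 0 < c' /\
      forall (N : nat) (f : nat -> RR), (0 < N)%N ->
        (forall n, inN N n -> -1 <= f n <= 1) ->
        delta <= gowersN s.+1 N (fun n => (f n)%:C) ->
        exists E : nat -> bool,
          (forall n, E n -> inN N n) /\
          measurable_set s Phi N E /\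
          c'%:C <= `|avgN N (fun n => (f n)%:C * indic E n)|.
Proof.
move=> GI s delta hs hdelta.
have [C [c [hC [hc HGI]]]] := GI s delta hs hdelta.
exists (growth C (c / 64)), (c / (16 * C)); split.
  by apply: growth_function_growth; rewrite ?divr_gt0.
split; first by rewrite divr_gt0 ?mulr_gt0.
move=> N f hN hf hgowers.
have hf1 n : inN N n -> `|f n| <= 1 by move/hf; rewrite ler_norml.
have hfC n : inN N n -> `|(f n)%:C| <= 1 by move/hf1; rewrite normC_real lecR.
have [psi [hpsi hcor]] := HGI N (fun n => (f n)%:C) hN hfC hgowers.
have := le_trans hcor (norm_avgN_mul_conjc_le N f (fun n => psi n%:Z)).
rewrite lecR => hsplit.
have [hRe | hIm] := lerP (c / 2) `|ravg N (fun n => f n * complex.Re (psi n%:Z))|.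
- have [E []] := correlation_measurable_set hC hc hN hpsi contraction_Re erefl hf1 hRe.
  by exists E.
- have hIm' : c / 2 <= `|ravg N (fun n => f n * complex.Im (psi n%:Z))| by lra.
  have [E []] := correlation_measurable_set hC hc hN hpsi contraction_Im erefl hf1 hIm'.
  by exists E.
Qed.
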